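(* Let $A=F/I$ where $I\subset F$ is a two-sided ideal generated by finitely many monomials, and let $M\subset\bigoplus_{i=1}^rA[-\delta_i]$ be a finitely generated monomial right submodule. Then $N=\bigoplus_iA[-\delta_i]/M$ has a minimal graded free right resolution in which every right syzygy module $M_i$ ($i\ge1$, with $M_1=M$) is finitely generated and monomial. Moreover, if $b_k(I)=0$ for all $k>d$ and $b_k(M)=0$ for all $k>\Delta$, then $b_k(M_i)=0$ for all $k>\Delta+(i-1)(d-1)$ and all $i\ge1$. (Such a resolution need not have finite length.)
   Context: $\mathbb K$ is a field, $F=\mathbb K\langle x_1,\dots,x_n\rangle$ the free associative algebra with standard grading and $W$ its set of monomials. $A[-\delta]_e=A_{e-\delta}$; $\bigoplus_iA[-\delta_i]$ is the graded free right $A$-module with basis $e_i$ of degree $\delta_i$. A right submodule of a graded free module $\bigoplus_jA[-\Delta_j]$ (basis $\epsilon_j$) is monomial if it is generated by elements of the form $\epsilon_j(w+I)$ with $w\in W$. A graded free right resolution of $N$ is an exact sequence $0\leftarrow N\leftarrow\bigoplus_iA[-\delta_i]\leftarrow\bigoplus_jA[-\delta'_j]\leftarrow\cdots$ of graded right module homomorphisms; $M_i$ is the kernel of the $(i+1)$-th map (so $M_0=N$, $M_1=M$), and the resolution is minimal if the images of the canonical bases are minimal homogeneous bases of the $M_i$. $b_k(\cdot)$ denotes the number of degree-$k$ elements in a minimal homogeneous basis (for $I$, as a two-sided ideal of $F$). *)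

From HB Require Import structures.
From mathcomp Require Import all_boot all_order all_algebra.
Set Implicit Arguments. Unset Strict Implicit. Unset Printing Implicit Defensive.
Import GRing.Theory Num.Theory.
Local Open Scope ring_scope.

Section FreeAlgebra.
Variables (K : fieldType) (n : nat).

(** Monomials W of F = K<x_1..x_n>: words over 'I_n; degree = length. *)
Definition word := seq 'I_n.
(** Elements of F are the finitely supported functions word -> K
   (a general function is a noncommutative formal series). *)
Definition ser := word -> K.
Definition ser0 : ser := fun _ => 0.
Definition seradd (f g : ser) : ser := fun w => f w + g w.
Definition seropp (f : ser) : ser := fun w => - f w.
Definition sersub (f g : ser) : ser := seradd f (seropp g).
Definition sermul (f g : ser) : ser :=
  fun w => \sum_(i < (size w).+1) f (take i w) * g (drop i w).
Definition mono (u : word) : ser := fun w => (w == u)%:R.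
Definition fin_supp (f : ser) : Prop :=
  exists s : seq word, forall w, f w != 0 -> w \in s.
Definition homog (f : ser) (e : nat) : Prop :=
  forall w, f w != 0 -> size w = e.

Inductive ideal_gen (S : ser -> Prop) : ser -> Prop :=
| ig_gen f : S f -> ideal_gen S f
| ig_zero : ideal_gen S ser0
| ig_add f g : ideal_gen S f -> ideal_gen S g -> ideal_gen S (seradd f g)
| ig_lmul a f : fin_supp a -> ideal_gen S f -> ideal_gen S (sermul a f)
| ig_rmul f a : fin_supp a -> ideal_gen S f -> ideal_gen S (sermul f a).

Definition monideal (G : seq word) : ser -> Prop :=
  ideal_gen (fun f => exists2 g, g \in G & f = mono g).

Definition min_hom_basis_ideal (X B : ser -> Prop) : Prop :=
  [/\ forall b, B b -> exists e, homog b e,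
      forall f, X f <-> ideal_gen B f &
      forall b, B b -> ~ (forall f, X f -> ideal_gen (fun y => B y /\ y <> b) f)].

(** b_k(X) = 0 for all k > d. *)
Definition bk_vanish_ideal (X : ser -> Prop) (d : nat) : Prop :=
  forall B, min_hom_basis_ideal X B ->
  forall b, B b -> b <> ser0 -> forall e, homog b e -> (e <= d)%N.

(** Graded free right A-module (+)_{j<m} A[-dg_j], A = F/I: elements are
   represented by vectors of elements of F, identified modulo I. *)
Definition vec (m : nat) := 'I_m -> ser.
Definition vzero m : vec m := fun _ => ser0.
Definition vadd m (x y : vec m) : vec m := fun j => seradd (x j) (y j).
Definition vmulr m (x : vec m) (a : ser) : vec m := fun j => sermul (x j) a.
Definition vmono m (j : 'I_m) (w : word) : vec m :=
  fun j' => if j' == j then mono w else ser0.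

Inductive rspan (I : ser -> Prop) (m : nat) (S : vec m -> Prop) : vec m -> Prop :=
| rs_gen x : S x -> rspan I S x
| rs_zero : rspan I S (@vzero m)
| rs_add x y : rspan I S x -> rspan I S y -> rspan I S (vadd x y)
| rs_mul x a : fin_supp a -> rspan I S x -> rspan I S (vmulr x a)
| rs_eq x y : rspan I S x -> (forall j, I (sersub (y j) (x j))) -> rspan I S y.

Definition vhomog m (dg : 'I_m -> int) (x : vec m) (e : int) : Prop :=
  forall j w, x j w != 0 -> (size w)%:Z + dg j = e.

Definition is_monomial (I : ser -> Prop) m (X : vec m -> Prop) : Prop :=
  exists S : 'I_m -> word -> Prop,
    forall x, X x <-> rspan I (fun y => exists j w, S j w /\ y = vmono j w) x.

Definition fin_gen (I : ser -> Prop) m (X : vec m -> Prop) : Prop :=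
  exists k (g : 'I_k -> vec m),
    forall x, X x <-> rspan I (fun y => exists i, y = g i) x.

Definition min_hom_basis (I : ser -> Prop) m (dg : 'I_m -> int)
    (X B : vec m -> Prop) : Prop :=
  [/\ forall b, B b -> exists e, vhomog dg b e,
      forall x, X x <-> rspan I B x &
      forall b, B b -> ~ (forall x, X x -> rspan I (fun y => B y /\ y <> b) x)].

(** b_k(X) = 0 for all k > D. *)
Definition bk_vanish (I : ser -> Prop) m (dg : 'I_m -> int)
    (X : vec m -> Prop) (D : int) : Prop :=
  forall B, min_hom_basis I dg X B ->
  forall b, B b -> b <> @vzero m -> forall e, vhomog dg b e -> e <= D.

(** The family fam (images of the canonical basis e_i of degree dgk i)
   is a minimal homogeneous basis of X. *)
Definition fam_min_basis (I : ser -> Prop) m (dg : 'I_m -> int)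
    (X : vec m -> Prop) k (fam : 'I_k -> vec m) (dgk : 'I_k -> int) : Prop :=
  [/\ forall i, vhomog dg (fam i) (dgk i),
      forall x, X x <-> rspan I (fun y => exists i, y = fam i) x &
      forall i, ~ (forall x, X x ->
                    rspan I (fun y => exists i', i' != i /\ y = fam i') x)].

Definition img (I : ser -> Prop) m k (fam : 'I_k -> vec m) : vec m -> Prop :=
  rspan I (fun y => exists i, y = fam i).

(** kernel of the homomorphism e_i |-> fam i (elements mod I) *)
Definition ker (I : ser -> Prop) m k (fam : 'I_k -> vec m) (x : vec k) : Prop :=
  (forall i, fin_supp (x i)) /\
  forall j, I (\big[seradd/ser0]_(i < k) sermul (fam i j) (x i)).

(** A minimal graded free right resolution of N = P_0 / M, P_0 = (+)_{j<r} A[-delta_j]: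
     P_{i+1} = (+)_{l < rk i} A[-dg i l];
     phi0 : P_1 -> P_0 (e_l |-> phi0 l),  phi i : P_{i+2} -> P_{i+1}.
   Syzygies: M_1 = M = img phi0 ; M_{i+2} = img (phi i) = ker of P_{i+1} -> P_i. *)
Definition min_graded_res (I : ser -> Prop) r (delta : 'I_r -> int)
    (M : vec r -> Prop) (rk : nat -> nat) (dg : forall i, 'I_(rk i) -> int)
    (phi0 : 'I_(rk 0%N) -> vec r) (phi : forall i, 'I_(rk i.+1) -> vec (rk i))
    : Prop :=
  [/\ fam_min_basis I delta M phi0 (dg 0%N),
      forall x, ker I phi0 x <-> img I (phi 0%N) x,
      forall i, fam_min_basis I (dg i) (img I (phi i)) (phi i) (dg i.+1) &
      forall i x, ker I (phi i) x <-> img I (phi i.+1) x].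

End FreeAlgebra.

(* Call a word reducible when it contains a generator of I as a factor.  Then I
   consists of the finitely supported series carried by reducible words, and the
   submodule generated by the monomials e_j w, (j, w) in a finite family T,
   consists of the finitely supported vectors all of whose terms e_j u have u
   reducible or u = w v for some (j, w) in T.  After discarding redundant pairs
   the family is reduced (irreducible words, no word a prefix of another one with
   the same index), and then it is a minimal basis.  The kernel of the map
   e_l |-> e_(j_l) w_l is again monomial: it is generated by the e_l v such that
   w_l v is reducible but neither v nor any w_l v' with v' a proper prefix of v
   is (Anick's obstructions).  Such a v is a proper suffix of a minimal generator
   of I, so there are finitely many of them, the new family is reduced again, and
   its degrees exceed the old ones by |v| <= d - 1.  Iterating gives the
   resolution and the bound Delta + i (d - 1); that the largest degree in a
   reduced family bounds every minimal homogeneous basis of its span follows by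
   taking homogeneous components. *)

From Pilot Require Import Defs.
From HB Require Import structures.
From mathcomp Require Import all_boot all_order all_algebra zify.
From Stdlib Require Import FunctionalExtensionality Classical_Prop.
Set Implicit Arguments. Unset Strict Implicit. Unset Printing Implicit Defensive.
Import Order.TTheory GRing.Theory Num.Theory.
Local Open Scope ring_scope.

Section PrefixSize.
Variable T : eqType.
Implicit Types a b g z : seq T.

Lemma prefix_of_prefixes a b z :
  prefix a z -> prefix b z -> (size a <= size b)%N -> prefix a b.
Proof.
move=> /prefixP [a' ->] /prefixP [b' eb] le_ab; rewrite prefixE.
have := congr1 (take (size a)) eb.
rewrite take_size_cat // take_cat.
case: ltnP => [_ <- //|ge_ab].
have -> : size a = size b by lia.
by rewrite subnn take0 cats0 take_size => ->.
Qed.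

Lemma suffix_of_suffixes a b z :
  suffix a z -> suffix b z -> (size a <= size b)%N -> suffix a b.
Proof. by move=> sa sb le_ab; apply: prefix_of_prefixes sa sb _; rewrite !size_rev. Qed.

Lemma infix_size_eq a b : infix a b -> size a = size b -> a = b.
Proof.
move=> /infixP [p [q ->]]; rewrite !size_cat => eq_size.
have /size0nil -> : size p = 0%N by lia.
have /size0nil -> : size q = 0%N by lia.
by rewrite cats0.
Qed.

Lemma prefix_neq_size_lt a b : prefix a b -> a != b -> (size a < size b)%N.
Proof.
move=> pre_ab; rewrite ltn_neqAle size_prefix // andbT.
by apply: contra => /eqP eq_size; apply/eqP/infix_size_eq => //; exact: prefixW.
Qed.

Lemma infix_suffix_or_behead g z :
  infix g z -> suffix g z \/ infix g (take (size z).-1 z).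
Proof.
move=> /infixP [p [[|c q] ->]]; first by left; rewrite cats0; exact: suffix_suffix.
right; apply: (@infix_trans _ (p ++ g)); first exact: suffix_infix.
apply/prefixW/(prefix_of_prefixes _ (prefix_take _ _)); first by rewrite catA prefix_prefix.
by rewrite size_takel ?leq_pred // !size_cat !addnS /= addnA leq_addr.
Qed.

End PrefixSize.

Lemma finsupp_ind (T : eqType) (R : nmodType) (P : (T -> R) -> Prop) :
  P (fun _ => 0) ->
  (forall f t, P (fun u => if u == t then 0 else f u) -> P f) ->
  forall (s : seq T) f, (forall t, f t != 0 -> t \in s) -> P f.
Proof.
move=> P0 Pstep; elim=> [|t s IH] f supp_f.
  suff -> : f = fun _ => 0 by [].
  by apply: functional_extensionality => u; apply/eqP; apply: contraT => /supp_f.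
apply: (Pstep f t); apply: IH => u; case: (u =P t) => [_|/eqP ne]; first by rewrite eqxx.
by move/supp_f; rewrite inE (negPf ne).
Qed.

Lemma finite_union (I : finType) (U : eqType) (A : I -> U -> Prop) :
  (forall i, exists s : seq U, forall x, A i x -> x \in s) ->
  exists s : seq U, forall i x, A i x -> x \in s.
Proof.
move=> /fin_all_exists [s sA]; exists (flatten [seq s i | i <- enum I]) => i x /sA x_si.
by apply/flattenP; exists (s i) => //; apply: map_f; rewrite mem_enum.
Qed.

Lemma witness_seq (A B : eqType) (s : seq A) (Q : A -> Prop) (R : A -> B -> Prop) :
  (forall a, a \in s -> Q a \/ exists b, R a b) ->
  exists t : seq B, (forall b, b \in t -> exists a, R a b) /\
                    forall a, a \in s -> Q a \/ exists2 b, b \in t & R a b.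
Proof.
elim: s => [|a s IH] wit; first by exists [::].
have [t [tR cover]] : exists t : seq B, (forall b, b \in t -> exists a, R a b) /\
    forall a', a' \in s -> Q a' \/ exists2 b, b \in t & R a' b.
  by apply: IH => a' s_a'; apply: wit; rewrite inE s_a' orbT.
have [Qa|[b Rab]] := wit a (mem_head a s).
  by exists t; split=> // a'; rewrite inE => /predU1P [->|/cover]; [left|].
exists (b :: t); split=> [b'|a'].
  by rewrite inE => /predU1P [->|/tR]; [exists a|].
rewrite inE => /predU1P [->|/cover [Qa'|[b' tb' Rab']]].
- by right; exists b; rewrite ?mem_head.
- by left.
- by right; exists b'; rewrite // inE tb' orbT.
Qed.

Section Series.
Variables (K : fieldType) (n : nat).
Local Notation word := (word n).
Local Notation ser := (ser K n).
Local Notation ser0 := (@ser0 K n).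
Implicit Types (f g a : ser) (u v w : word) (c : K).

Definition cmono c u : ser := fun w => if w == u then c else 0.

Lemma mono_cmono u : mono K u = cmono 1 u.
Proof. by apply: functional_extensionality => w; rewrite /mono /cmono; case: eqP. Qed.

Lemma cmono0 u : cmono 0 u = ser0.
Proof. by apply: functional_extensionality => w; rewrite /cmono; case: ifP. Qed.

Lemma sermul_neq0 f g w : sermul f g w != 0 ->
  exists i, f (take i w) != 0 /\ g (drop i w) != 0.
Proof.
rewrite /sermul => nz.
suff /existsP [i /andP [fi gi]] : [exists i : 'I_(size w).+1,
    (f (take i w) != 0) && (g (drop i w) != 0)] by exists i.
apply: contraNT nz => /existsPn none; apply/eqP/big1 => i _.
by move: (none i); rewrite negb_and !negbK => /orP [] /eqP ->; rewrite ?mul0r ?mulr0.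
Qed.

Lemma sermul_cmonol c u g w :
  sermul (cmono c u) g w = if prefix u w then c * g (drop (size u) w) else 0.
Proof.
rewrite /sermul /cmono; case: (boolP (prefix u w)) => [/prefixP [v ->]|not_pre]; last first.
  rewrite big1 // => i _; case: eqP => [eq_u|_]; last by rewrite mul0r.
  by rewrite -eq_u prefix_take in not_pre.
have su : (size u < (size (u ++ v)).+1)%N by rewrite ltnS size_cat leq_addr.
rewrite (bigD1 (Ordinal su)) //= take_size_cat // eqxx drop_size_cat //.
rewrite big1 ?addr0 // => i /eqP neq_i; case: eqP => [eq_u|_]; last by rewrite mul0r.
case: neq_i; apply: val_inj => /=.
by have := congr1 size eq_u; rewrite size_takel // -ltnS; exact: ltn_ord.
Qed.

Lemma sermul_cmonor f c v w :
  sermul f (cmono c v) w =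
  if suffix v w then f (take (size w - size v) w) * c else 0.
Proof.
rewrite /sermul /cmono; case: (boolP (suffix v w)) => [/suffixP [u ->]|not_suf]; last first.
  rewrite big1 // => i _; case: eqP => [eq_v|_]; last by rewrite mulr0.
  by rewrite -eq_v suffix_drop in not_suf.
have su : (size u < (size (u ++ v)).+1)%N by rewrite ltnS size_cat leq_addr.
have -> : (size (u ++ v) - size v = size u)%N by rewrite size_cat addnK.
rewrite (bigD1 (Ordinal su)) //= drop_size_cat // eqxx take_size_cat //.
rewrite big1 ?addr0 // => i /eqP neq_i; case: eqP => [eq_v|_]; last by rewrite mulr0.
case: neq_i; apply: val_inj => /=; apply/eqP.
have := congr1 size eq_v; rewrite size_drop => eq_size.
rewrite -(eqn_add2r (size v)) -{1}eq_size subnKC ?size_cat //.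
by rewrite -ltnS; exact: ltn_ord.
Qed.

Lemma cmono_mul c d u v : sermul (cmono c u) (cmono d v) = cmono (c * d) (u ++ v).
Proof.
apply: functional_extensionality => w; rewrite sermul_cmonol /cmono.
case: ifP => [/prefixP [z ->]|not_pre].
  by rewrite drop_size_cat // eqseq_cat // eqxx /=; case: eqP; rewrite ?mulr0.
by case: eqP => // eq_w; rewrite eq_w prefix_prefix in not_pre.
Qed.

Lemma ser_cmono_split f u :
  f = seradd (fun w => if w == u then 0 else f w) (cmono (f u) u).
Proof.
apply: functional_extensionality => w; rewrite /seradd /cmono.
by case: (w =P u) => [->|]; rewrite ?add0r ?addr0.
Qed.

Lemma sermul0r f : sermul f ser0 = ser0.
Proof.
by apply: functional_extensionality => w; rewrite /sermul big1 // => i _; rewrite mulr0.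
Qed.

Lemma sermul0l f : sermul ser0 f = ser0.
Proof.
by apply: functional_extensionality => w; rewrite /sermul big1 // => i _; rewrite mul0r.
Qed.

Lemma sermulDr f a b : sermul f (seradd a b) = seradd (sermul f a) (sermul f b).
Proof.
apply: functional_extensionality => w; rewrite /sermul /seradd -big_split /=.
by apply: eq_bigr => i _; rewrite mulrDr.
Qed.

Lemma fin_supp0 : fin_supp ser0.
Proof. by exists [::] => w; rewrite eqxx. Qed.

Lemma fin_supp_cmono c u : fin_supp (cmono c u).
Proof. by exists [:: u] => w; rewrite /cmono inE; case: (w =P u) => // _; rewrite eqxx. Qed.

Lemma fin_supp_mono u : fin_supp (mono K u).
Proof. by rewrite mono_cmono; exact: fin_supp_cmono. Qed.

Lemma fin_supp_add f g : fin_supp f -> fin_supp g -> fin_supp (seradd f g).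
Proof.
move=> [s sf] [t tg]; exists (s ++ t) => w; rewrite /seradd mem_cat.
by case: (eqVneq (f w) 0) => [-> | /sf -> //]; rewrite add0r => /tg ->; rewrite orbT.
Qed.

Lemma fin_supp_mul f g : fin_supp f -> fin_supp g -> fin_supp (sermul f g).
Proof.
move=> [s sf] [t tg]; exists [seq x ++ y | x <- s, y <- t] => w /sermul_neq0 [i [fi gi]].
by rewrite -(cat_take_drop i w); apply: allpairs_f; [exact: sf | exact: tg].
Qed.

Lemma big_seradd_eval k (F : 'I_k -> ser) z :
  (\big[@seradd K n/ser0]_(l < k) F l) z = \sum_(l < k) F l z.
Proof. by elim/big_rec2: _ => [|i f g _ <-]. Qed.

End Series.

Section MonomialIdeal.
Variables (K : fieldType) (n : nat).
Local Notation word := (word n).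
Local Notation ser := (ser K n).
Implicit Types (L : seq word) (f : ser) (u v w : word).

Lemma ideal_gen_sub (S S' : ser -> Prop) f :
  (forall y, S y -> ideal_gen S' y) -> ideal_gen S f -> ideal_gen S' f.
Proof.
move=> SS'; elim=> {f} [f /SS' //| |f g _ + _| a f fa _| f a fa _].
- exact: ig_zero.
- exact: ig_add.
- exact: ig_lmul.
- exact: ig_rmul.
Qed.

Definition reducible L w := has (fun g => infix g w) L.

Lemma reducible_infix L u w : infix u w -> reducible L u -> reducible L w.
Proof. by move=> uw /hasP [g gL gu]; apply/hasP; exists g => //; exact: infix_trans gu uw. Qed.

Lemma reducible_take L w i : reducible L (take i w) -> reducible L w.
Proof. exact/reducible_infix/infix_take. Qed.

Lemma reducible_drop L w i : reducible L (drop i w) -> reducible L w.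
Proof. exact/reducible_infix/infix_drop. Qed.

Lemma monideal_cmono L (c : K) u : reducible L u -> monideal L (cmono c u).
Proof.
move=> /hasP [g gL /infixP [p [q ->]]].
have -> : cmono c (p ++ g ++ q) = sermul (sermul (cmono c p) (mono K g)) (cmono 1 q).
  by rewrite mono_cmono !cmono_mul !mulr1 catA.
by apply: ig_rmul (fin_supp_cmono _ _) _; apply: ig_lmul (fin_supp_cmono _ _) _;
   apply: ig_gen; exists g.
Qed.

Lemma monidealP L f :
  monideal L f <-> fin_supp f /\ forall w, f w != 0 -> reducible L w.
Proof.
split.
  elim=> {f} [_ [g gL ->]| |f g _ [ff rf] _ [fg rg]|a f fa _ [ff rf]|f a fa _ [ff rf]].
  - split=> [|w]; first exact: fin_supp_mono.
    rewrite /mono; case: (w =P g) => [-> _|_]; last by rewrite eqxx.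
    by apply/hasP; exists g => //; exact: infix_refl.
  - by split=> [|w]; [exact: fin_supp0 | rewrite eqxx].
  - split=> [|w]; first exact: fin_supp_add.
    by rewrite /seradd; case: (eqVneq (f w) 0) => [->|/rf //]; rewrite add0r => /rg.
  - split=> [|w /sermul_neq0 [i [_ /rf]]]; [exact: fin_supp_mul | exact: reducible_drop].
  - split=> [|w /sermul_neq0 [i [/rf + _]]]; [exact: fin_supp_mul | exact: reducible_take].
move=> [[s supp_f]]; move: f supp_f; apply: finsupp_ind => [_|f t IH red_f].
  exact: ig_zero.
rewrite (ser_cmono_split f t).
apply: ig_add.
  by apply: IH => u; case: (u =P t) => [_|_ /red_f //]; rewrite eqxx.
have [-> | /red_f] := eqVneq (f t) 0; first by rewrite cmono0; exact: ig_zero.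
exact: monideal_cmono.
Qed.

End MonomialIdeal.

Section MinimalGenerators.
Variables (K : fieldType) (n : nat) (L : seq (word n)).
Implicit Types (g u v w : word n).

Definition minimal_gen g := all (fun g' => infix g' g ==> (g' == g)) L.

Definition mingens := [seq g <- L | minimal_gen g].

Definition gen_suffixes : seq (word n) :=
  [seq drop i g | g <- L, i <- iota 0 (size g).+1].

Lemma mem_gen_suffixes g v : g \in L -> suffix v g -> v \in gen_suffixes.
Proof.
move=> gG; rewrite suffixE => /eqP <-; apply/allpairsPdep.
by exists g, (size g - size v)%N; rewrite mem_iota ltnS leq_subr.
Qed.

Lemma exists_minimal_gen (P : pred (word n)) :
  (forall g g', g' \in L -> infix g' g -> P g -> P g') ->
  (exists2 g, g \in L & P g) -> exists g, [/\ g \in L, P g & minimal_gen g].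
Proof.
move=> P_infix [g0 g0L Pg0].
have ex_size : exists k, has (fun g => P g && (size g == k)) L.
  by exists (size g0); apply/hasP; exists g0; rewrite ?Pg0 ?eqxx.
have [k /hasP [g gL /andP [Pg /eqP size_g]] k_min] := ex_minnP ex_size.
exists g; split=> //; apply/allP => g' g'L; apply/implyP => g'g; apply/eqP.
have le_g : (size g <= size g')%N.
  by rewrite size_g; apply: k_min; apply/hasP; exists g'; rewrite // (P_infix g) ?eqxx.
by apply: (infix_size_eq g'g); apply/eqP; rewrite eqn_leq le_g (size_infix g'g).
Qed.

Lemma reducible_mingens w : reducible (mingens) w = reducible L w.
Proof.
apply/idP/idP => [/hasP [g] | /hasP [g0 g0L g0w]].
  by rewrite mem_filter => /andP [_ gL] gw; apply/hasP; exists g.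
have infix_w g g' : g' \in L -> infix g' g -> infix g w -> infix g' w.
  by move=> _ /infix_trans; apply.
have [g [gL gw ming]] := exists_minimal_gen infix_w (ex_intro2 _ _ g0 g0L g0w).
by apply/hasP; exists g; rewrite // mem_filter ming.
Qed.

Lemma mingens_min_hom_basis :
  min_hom_basis_ideal (monideal (K:=K) L) (fun f => exists2 g, g \in mingens & f = mono K g).
Proof.
split.
- move=> _ [g _ ->]; exists (size g) => w.
  by rewrite /mono; case: (w =P g) => [->|]; rewrite ?eqxx.
- move=> f; change (monideal (K:=K) L f <-> monideal mingens f).
  by rewrite !monidealP; split=> -[fs fr]; split=> // w /fr; rewrite reducible_mingens.
move=> b [g]; rewrite mem_filter => /andP [ming gL] -> gen_without_g.
have gI : monideal (K:=K) L (mono K g) by apply: ig_gen; exists g.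
have : monideal [seq g' <- mingens | g' != g] (mono K g).
  apply: ideal_gen_sub (gen_without_g _ gI).
  move=> _ [[g' g'min ->] neq_g']; apply: ig_gen; exists g' => //.
  by rewrite mem_filter g'min andbT; apply: contra_notN neq_g' => /eqP ->.
move=> /monidealP [_ /(_ g)]; rewrite /mono eqxx oner_eq0 => /(_ isT) /hasP [g'].
rewrite !mem_filter => /and3P [neq_g' _ g'L] g'g.
by move/allP: ming => /(_ g' g'L); rewrite g'g (negPf neq_g').
Qed.

Lemma size_mingen_le d g : bk_vanish_ideal (monideal (K:=K) L) d ->
  g \in L -> minimal_gen g -> (size g <= d)%N.
Proof.
move=> /(_ _ mingens_min_hom_basis (mono K g)) bound gL ming; apply: bound.
- by exists g; rewrite // mem_filter ming.
- by move/(congr1 (fun f => f g)); rewrite /mono eqxx => /eqP; rewrite oner_eq0.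
- by move=> w; rewrite /mono; case: (w =P g) => [->|]; rewrite ?eqxx.
Qed.

Lemma obstruction_suffix_mingen w v :
  ~~ reducible L w -> reducible L (w ++ v) -> ~~ reducible L v ->
  (forall i, (i < size v)%N -> ~~ reducible L (w ++ take i v)) ->
  exists g, [/\ g \in L, minimal_gen g, (size v < size g)%N & suffix v g].
Proof.
move=> irr_w red_wv irr_v irr_pre.
have v_gt0 : (0 < size v)%N.
  by case: v {irr_v irr_pre} red_wv => //; rewrite cats0 (negPf irr_w).
have behead_wv : take (size (w ++ v)).-1 (w ++ v) = w ++ take (size v).-1 v.
  rewrite take_cat size_cat; case: ltnP => [|_]; first lia.
  by congr (_ ++ take _ _); lia.
have suffix_gen g : g \in L -> infix g (w ++ v) -> suffix g (w ++ v).
  move=> gL /infix_suffix_or_behead [//|g_behead].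
  have /negP[] : ~~ reducible L (w ++ take (size v).-1 v) by rewrite irr_pre ?ltn_predL.
  by rewrite -behead_wv; apply/hasP; exists g.
have suffix_infix_closed g g' : g' \in L -> infix g' g ->
    suffix g (w ++ v) -> suffix g' (w ++ v).
  by move=> g'L g'g /suffixW /(infix_trans g'g); exact: suffix_gen.
have [g [gL g_wv ming]] : exists g, [/\ g \in L, suffix g (w ++ v) & minimal_gen g].
  apply: (exists_minimal_gen (P := fun g => suffix g (w ++ v))) suffix_infix_closed _.
  by case/hasP: red_wv => g gL g_wv; exists g; last exact: suffix_gen.
have v_lt_g : (size v < size g)%N.
  rewrite ltnNge; apply: contra irr_v => le_gv; apply/hasP; exists g => //.
  exact/suffixW/(suffix_of_suffixes g_wv (suffix_suffix w v)).
by exists g; split=> //; exact: suffix_of_suffixes (suffix_suffix w v) g_wv (ltnW v_lt_g).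
Qed.

End MinimalGenerators.

Section MonomialSubmodules.
Variables (K : fieldType) (n : nat) (G : seq (word n)) (m : nat).
Local Notation word := (word n).
Local Notation ser := (ser K n).
Local Notation vec := (vec K n m).
Local Notation I := (monideal (K:=K) G).
Implicit Types (x y : vec) (u v w : word) (S : vec -> Prop).

Definition vterm (j : 'I_m) u (c : K) : vec :=
  fun j' => if j' == j then cmono c u else @ser0 K n.

Lemma vterm_cat j u v c : vterm j (u ++ v) c = vmulr (vmono K j u) (cmono c v).
Proof.
apply: functional_extensionality => j'; rewrite /vterm /vmulr /vmono.
by case: (j' == j); rewrite ?sermul0l // mono_cmono cmono_mul mul1r.
Qed.

Lemma rspan_sub S S' x :
  (forall y, S y -> rspan I S' y) -> rspan I S x -> rspan I S' x.
Proof.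
move=> SS'; elim=> {x} [x /SS' //| |x y _ + _| x a fa _| x y _ + xy].
- exact: rs_zero.
- exact: rs_add.
- exact: rs_mul.
- by move=> span_x; apply: rs_eq span_x xy.
Qed.

Lemma vsupp_seq x : (forall j, fin_supp (x j)) ->
  exists s : seq ('I_m * word), forall j u, x j u != 0 -> (j, u) \in s.
Proof.
move=> fx; have supp_pairs j : exists s : seq ('I_m * word),
    forall p, p.1 = j /\ x j p.2 != 0 -> p \in s.
  have [t supp_j] := fx j; exists [seq (j, u) | u <- t] => -[_ u] /= [-> /supp_j].
  exact: map_f.
have [s supp_x] := finite_union supp_pairs.
by exists s => j u nz; apply: (supp_x j).
Qed.

Lemma vec_finsupp_ind (P : vec -> Prop) :
  P (@vzero K n m) ->
  (forall x j u, P (fun j' u' => if (j' == j) && (u' == u) then 0 else x j' u') -> P x) ->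
  forall x, (forall j, fin_supp (x j)) -> P x.
Proof.
move=> P0 Pstep x /vsupp_seq [s supp_x].
pose Q (f : 'I_m * word -> K) := P (fun j u => f (j, u)).
apply: (@finsupp_ind _ _ Q P0 _ s (fun p => x p.1 p.2)) => [f [j u] Qf|[j u] /supp_x //].
exact: (Pstep (fun j u => f (j, u)) j u Qf).
Qed.

Lemma vmulr0 x : vmulr x (@ser0 K n) = @vzero K n m.
Proof. by apply: functional_extensionality => j; rewrite /vmulr sermul0r. Qed.

Lemma vmulrDr x (a b : ser) : vmulr x (seradd a b) = vadd (vmulr x a) (vmulr x b).
Proof. by apply: functional_extensionality => j; rewrite /vmulr sermulDr. Qed.

Lemma vmono_homog (dg : 'I_m -> int) j w : vhomog dg (vmono K j w) ((size w)%:Z + dg j).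
Proof.
move=> j' w'; rewrite /vmono; case: (j' =P j) => [->|_]; last by rewrite eqxx.
by rewrite /mono; case: (w' =P w) => [->|_]; rewrite ?eqxx.
Qed.

Lemma vterm0 j u : vterm j u 0 = @vzero K n m.
Proof.
by apply: functional_extensionality => j'; rewrite /vterm cmono0; case: (j' == j).
Qed.

Lemma rspan_monomial_supp S (P : 'I_m -> word -> Prop) x :
  (forall y, S y -> exists j w, P j w /\ y = vmono K j w) -> rspan I S x ->
  (forall j, fin_supp (x j)) /\
  forall j u, x j u != 0 -> reducible G u \/ exists2 w, P j w & prefix w u.
Proof.
move=> S_mono; elim=> {x} [_ /S_mono [j [w [Pjw ->]]]| |x y _ [fx cx] _ [fy cy]|
                          x a fa _ [fx cx]|x y _ [fx cx] /(_ _) /monidealP xy].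
- split=> [j'|j' u]; have [->|ne] := eqVneq j' j; rewrite /vmono ?eqxx ?(negPf ne).
  + exact: fin_supp_mono.
  + exact: fin_supp0.
  + by rewrite /mono; case: (u =P w) => [->|_]; rewrite ?eqxx // => _; right; exists w;
      last exact: prefix_refl.
  + by rewrite eqxx.
- by split=> [j|j u]; [exact: fin_supp0 | rewrite eqxx].
- split=> [j|j u]; first exact: fin_supp_add.
  by rewrite /vadd /seradd; case: (eqVneq (x j u) 0) => [->|/cx //]; rewrite add0r => /cy.
- split=> [j|j u /sermul_neq0 [i [/cx [red_u|[w Pjw pre_w]] _]]]; first exact: fin_supp_mul.
    by left; exact: reducible_take red_u.
  by right; exists w => //; exact: prefix_trans pre_w (prefix_take _ _).
- have y_eq j : y j = seradd (sersub (y j) (x j)) (x j).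
    by apply: functional_extensionality => w; rewrite /seradd /sersub /seradd /seropp subrK.
  split=> [j|j u]; first by rewrite y_eq; apply: fin_supp_add (proj1 (xy j)) (fx j).
  rewrite y_eq /seradd; case: (eqVneq (x j u) 0) => [->|/cx //].
  by rewrite addr0 => /(proj2 (xy j)); left.
Qed.

Lemma rspan_monomial_cover S x :
  (forall j, fin_supp (x j)) ->
  (forall j u, x j u != 0 ->
     reducible G u \/ exists2 w, prefix w u & rspan I S (vmono K j w)) ->
  rspan I S x.
Proof.
move: x; apply: vec_finsupp_ind => [_|x j0 u0 IH cover]; first exact: rs_zero.
have -> : x = vadd (fun j u => if (j == j0) && (u == u0) then 0 else x j u)
                   (vterm j0 u0 (x j0 u0)).
  apply: functional_extensionality => j; apply: functional_extensionality => u.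
  rewrite /vadd /seradd /vterm /cmono.
  by case: (j =P j0) => [->|]; case: (u =P u0) => [->|] /=; rewrite ?add0r ?addr0.
apply: rs_add.
  by apply: IH => j u; case: ifP => [_|_ /cover //]; rewrite eqxx.
have [->|/cover [red_u0|[w /prefixP [v ->] span_w]]] := eqVneq (x j0 u0) 0.
- by rewrite vterm0; exact: rs_zero.
- apply: (rs_eq (x := @vzero K n m)); first exact: rs_zero.
  move=> j; rewrite /vterm.
  have -> : forall f : ser, sersub f (@ser0 K n) = f.
    by move=> f; apply: functional_extensionality => u; rewrite /sersub /seradd /seropp subr0.
  by case: (j == j0); [exact: monideal_cmono | exact: ig_zero].
- by rewrite vterm_cat; apply: rs_mul span_w; exact: fin_supp_cmono.
Qed.

Section MonomialFamily.
Variable T : seq ('I_m * word).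

Definition mindex (l : 'I_(size T)) : 'I_m := (tnth (in_tuple T) l).1.
Definition mword (l : 'I_(size T)) : word := (tnth (in_tuple T) l).2.
Definition monfam (l : 'I_(size T)) : vec := vmono K (mindex l) (mword l).
Definition monfam_deg (dg : 'I_m -> int) (l : 'I_(size T)) : int :=
  (size (mword l))%:Z + dg (mindex l).

Definition reduced :=
  [/\ uniq T, forall p, p \in T -> ~~ reducible G p.2 &
      forall p q, p \in T -> q \in T -> p.1 = q.1 -> prefix p.2 q.2 -> p = q].

Lemma mem_monfam l : (mindex l, mword l) \in T.
Proof. by rewrite -surjective_pairing mem_tnth. Qed.

Lemma monfam_onto p : p \in T -> exists l, (mindex l, mword l) = p.
Proof.
move=> pT; have lt_p : (index p T < size T)%N by rewrite index_mem.
by exists (Ordinal lt_p); rewrite -surjective_pairing (tnth_nth p) /= nth_index.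
Qed.

Lemma monfam_inj l l' : uniq T ->
  (mindex l, mword l) = (mindex l', mword l') -> l = l'.
Proof.
rewrite -!surjective_pairing => uniqT; have x0 := tnth (in_tuple T) l.
by rewrite !(tnth_nth x0) /= => /eqP; rewrite nth_uniq // => /eqP /val_inj.
Qed.

Lemma monfamP y :
  (exists l, y = monfam l) <-> exists j w, (j, w) \in T /\ y = vmono K j w.
Proof.
split=> [[l ->]|[j [w [jwT ->]]]]; first by exists (mindex l), (mword l); rewrite mem_monfam.
by have [l [<- <-]] := monfam_onto jwT; exists l.
Qed.

Lemma img_monfam_monomial : is_monomial I (img I monfam).
Proof.
exists (fun j w => (j, w) \in T) => x; split; apply: rspan_sub => y.
  by move=> /monfamP gen_y; apply: rs_gen.
by move=> gen_y; apply: rs_gen; apply/monfamP.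
Qed.

Lemma img_monfam_fin_gen : fin_gen I (img I monfam).
Proof. by exists (size T), monfam. Qed.

Lemma img_monfamP x : img I monfam x <->
  (forall j, fin_supp (x j)) /\
  forall j u, x j u != 0 -> reducible G u \/ exists2 w, (j, w) \in T & prefix w u.
Proof.
split=> [|[fx cover]].
  by apply: rspan_monomial_supp => y /monfamP [j [w [jwT ->]]]; exists j, w.
apply: rspan_monomial_cover => // j u /cover [red_u|[w jwT pre_w]]; [by left | right].
by exists w => //; apply: rs_gen; apply/monfamP; exists j, w.
Qed.

Lemma reduced_prefix_inj l l' z : reduced -> mindex l = mindex l' ->
  prefix (mword l) z -> prefix (mword l') z -> l = l'.
Proof.
move=> [uniqT _ prefT] eq_j pre pre'; apply: monfam_inj uniqT _.
case: (leqP (size (mword l)) (size (mword l'))) => [le_ll'|/ltnW le_l'l].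
  exact: prefT (mem_monfam l) (mem_monfam l') eq_j (prefix_of_prefixes pre pre' le_ll').
by symmetry; exact: prefT (mem_monfam l') (mem_monfam l) (esym eq_j)
  (prefix_of_prefixes pre' pre le_l'l).
Qed.

Lemma monfam_min_basis dg :
  reduced -> fam_min_basis I dg (img I monfam) monfam (monfam_deg dg).
Proof.
move=> redT; split=> // [l|l span_others]; first exact: vmono_homog.
have others_mono y : (exists l', l' != l /\ y = monfam l') -> exists j w,
    (exists2 l', l' != l & (j, w) = (mindex l', mword l')) /\ y = vmono K j w.
  by move=> [l' [ne ->]]; exists (mindex l'), (mword l'); split=> //; exists l'.
have [_ /(_ (mindex l) (mword l))] :=
  rspan_monomial_supp others_mono (span_others _ (rs_gen _ (ex_intro _ l erefl))).
rewrite /monfam /vmono eqxx /mono eqxx oner_eq0 => /(_ isT) [|[w [l' ne_l [eq_j ->]] pre]].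
  by case: redT => _ irrT _; apply/negP/(irrT _ (mem_monfam l)).
by case/eqP: ne_l; apply: reduced_prefix_inj redT (esym eq_j) pre (prefix_refl _).
Qed.

Lemma monfam_neq0 l : monfam l <> @vzero K n m.
Proof.
move/(congr1 (fun x => x (mindex l) (mword l))).
by rewrite /monfam /vmono /mono !eqxx => /eqP; rewrite oner_eq0.
Qed.

Lemma monfam_mulE l j (a : ser) z : sermul (monfam l j) a z =
  if (j == mindex l) && prefix (mword l) z then a (drop (size (mword l)) z) else 0.
Proof.
rewrite /monfam /vmono; case: (j == mindex l); last by rewrite sermul0l.
by rewrite mono_cmono sermul_cmonol; case: ifP; rewrite ?mul1r.
Qed.

Lemma ker_monfamP (x : Defs.vec K n (size T)) : reduced -> ker I monfam x <->
  (forall l, fin_supp (x l)) /\ forall l u, x l u != 0 -> reducible G (mword l ++ u).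
Proof.
move=> redT; split=> [[fx kerx]|[fx cover]].
  split=> // l u nz; have /monidealP [_] := kerx (mindex l); apply.
  rewrite big_seradd_eval (bigD1 l) //=.
  rewrite monfam_mulE eqxx prefix_prefix drop_size_cat // big1 ?addr0 // => l' ne_l'.
  rewrite monfam_mulE; case: (mindex l =P mindex l') => //= eq_j; case: ifP => // pre'.
  by case/eqP: ne_l'; apply: reduced_prefix_inj redT (esym eq_j) pre' (prefix_prefix _ _).
split=> // j; apply/monidealP; split.
  elim/big_rec: _ => [|l f _ ff]; first exact: fin_supp0.
  apply: fin_supp_add (fin_supp_mul _ (fx l)) ff.
  by rewrite /monfam /vmono; case: (j == mindex l); [exact: fin_supp_mono | exact: fin_supp0].
move=> z; rewrite big_seradd_eval => nz.
have [l] : exists l, sermul (monfam l j) (x l) z != 0.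
  by apply/existsP; apply: contraNT nz => /existsPn zero; apply/eqP/big1 => l _; apply/eqP/negPn.
rewrite monfam_mulE; case: ifP => [/andP [_ /prefixP [u ->]]|]; last by rewrite eqxx.
by rewrite drop_size_cat // => /cover.
Qed.

Definition obstruction l v := [&& reducible G (mword l ++ v), ~~ reducible G v &
  all (fun i => ~~ reducible G (mword l ++ take i v)) (iota 0 (size v))].

Definition syz : seq ('I_(size T) * word) :=
  undup [seq p <- [seq (l, v) | l <- enum 'I_(size T), v <- gen_suffixes G] |
         obstruction p.1 p.2].

Lemma obstruction_mingen l v : reduced -> obstruction l v ->
  exists g, [/\ g \in G, minimal_gen G g, (size v < size g)%N & suffix v g].
Proof.
move=> [_ irrT _] /and3P [red_wv irr_v /allP irr_pre].
apply: obstruction_suffix_mingen red_wv irr_v _; first exact: irrT (mem_monfam l).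
by move=> i lt_i; apply: irr_pre; rewrite mem_iota.
Qed.

Lemma mem_syz l v : reduced -> ((l, v) \in syz) = obstruction l v.
Proof.
move=> redT; rewrite mem_undup mem_filter /=; apply/andP/idP => [[]//|obs]; split=> //.
have [g [gG _ _ suf_v]] := obstruction_mingen redT obs.
by apply: allpairs_f; rewrite ?mem_enum // (mem_gen_suffixes gG suf_v).
Qed.

End MonomialFamily.

End MonomialSubmodules.

Arguments mindex {n m} T l.
Arguments mword {n m} T l.
Arguments monfam K {n m} T l _.
Arguments monfam_deg {n m} T dg l.

Section ReducedGenerators.
Variables (K : fieldType) (n : nat) (G : seq (word n)) (m : nat).
Local Notation word := (word n).
Local Notation vec := (vec K n m).
Local Notation I := (monideal (K:=K) G).

Lemma reduce_family (T1 : seq ('I_m * word)) : exists T0,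
  [/\ reduced G T0, {subset T0 <= T1} &
      forall p, p \in T1 -> reducible G p.2 \/ exists2 w, (p.1, w) \in T0 & prefix w p.2].
Proof.
pose shorter (p q : 'I_m * word) := [&& q.1 == p.1, q.2 != p.2 & prefix q.2 p.2].
pose T0 := undup [seq p <- T1 | ~~ reducible G p.2 && ~~ has (shorter p) T1].
exists T0; split.
- split=> [|p|[j w] [j' w'] /=]; first exact: undup_uniq.
    by rewrite mem_undup mem_filter => /andP [/andP []].
  rewrite !mem_undup !mem_filter => /andP [_ T1jw] /andP [/andP [_ no_shorter] _] eq_j pre.
  subst j'; have [-> //|ne] := eqVneq w w'.
  by case/hasP: no_shorter; exists (j, w); rewrite // /shorter /= eqxx ne pre.
- by move=> p; rewrite mem_undup mem_filter => /andP [].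
suff cover k p : (size p.2 < k)%N -> p \in T1 ->
    reducible G p.2 \/ exists2 w, (p.1, w) \in T0 & prefix w p.2.
  by move=> p; apply: (cover (size p.2).+1).
elim: k p => [//|k IH] p lt_pk T1p.
have [red_p|irr_p] := boolP (reducible G p.2); first by left.
have [/hasP [q T1q /and3P [/eqP eq_j ne pre]]|minimal] := boolP (has (shorter p) T1).
  have lt_qk : (size q.2 < k)%N := leq_trans (prefix_neq_size_lt pre ne) lt_pk.
  case: (IH q lt_qk T1q) => [red_q|[w T0w pre_w]].
    by case/negP: irr_p; exact: reducible_infix (prefixW pre) red_q.
  by right; exists w; rewrite -?eq_j //; exact: prefix_trans pre_w pre.
right; exists p.2; last exact: prefix_refl.
by rewrite -surjective_pairing mem_undup mem_filter irr_p minimal.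
Qed.

Lemma img_monfam_reduce (T1 T0 : seq ('I_m * word)) :
  {subset T0 <= T1} ->
  (forall p, p \in T1 -> reducible G p.2 \/ exists2 w, (p.1, w) \in T0 & prefix w p.2) ->
  forall x, img I (monfam K T1) x <-> img I (monfam K T0) x.
Proof.
move=> sub01 cover01 x; rewrite !img_monfamP; split=> -[fx cover]; split=> // j u /cover.
  case=> [|[w /cover01 [red_w|[w0 T0w0 pre0]] pre_w]]; first by left.
    by left; exact: reducible_infix (prefixW pre_w) red_w.
  by right; exists w0 => //; exact: prefix_trans pre0 pre_w.
by case=> [|[w /sub01 T1w pre_w]]; [left | right; exists w].
Qed.

Lemma monomial_fin_gen_monfam (M : vec -> Prop) : is_monomial I M -> fin_gen I M ->
  exists T1 : seq ('I_m * word), forall x, M x <-> img I (monfam K T1) x.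
Proof.
move=> [S defM] [k [g defg]].
have span_g i : rspan I (fun y => exists j w, S j w /\ y = vmono K j w) (g i).
  by apply/defM/defg; apply: rs_gen; exists i.
have supp_g i := rspan_monomial_supp (fun y Sy => Sy) (span_g i).
have [s supp_s] : exists s : seq ('I_m * word),
    forall i p, g i p.1 p.2 != 0 -> p \in s.
  apply: finite_union => i; have [s supp] := vsupp_seq (proj1 (supp_g i)).
  by exists s => -[j u]; apply: supp.
pose supp_gens := [seq p <- s | [exists i, g i p.1 p.2 != 0]].
pose R (p q : 'I_m * word) := [/\ q.1 = p.1, S q.1 q.2 & prefix q.2 p.2].
have wit p : p \in supp_gens -> reducible G p.2 \/ exists q, R p q.
  case: p => j u; rewrite mem_filter => /andP [/existsP [i nz] _].
  by case: (proj2 (supp_g i) j u nz) => [|[w Sw pre_w]]; [left | right; exists (j, w)].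
have [T1 [T1S cover]] := witness_seq wit.
exists T1 => x; split.
  move/defg; apply: rspan_sub => _ [i ->]; apply/img_monfamP; split=> [|j u nz].
    exact: (proj1 (supp_g i)).
  have : (j, u) \in supp_gens.
    by rewrite mem_filter (supp_s i (j, u) nz) andbT; apply/existsP; exists i.
  by case/cover => [red_u|[[j' w] T1w [/= <- _ pre_w]]]; [left | right; exists w].
move=> /img_monfamP [fx cover_x]; apply/defM/rspan_monomial_cover => // j u nz.
case: (cover_x j u nz) => [red_u|[w T1w pre_w]]; [by left | right; exists w => //].
have [p [_ Sw _]] := T1S _ T1w.
by apply: rs_gen; exists j, w.
Qed.

Lemma monomial_fin_gen_reduced (M : vec -> Prop) : is_monomial I M -> fin_gen I M ->
  exists T0 : seq ('I_m * word), reduced G T0 /\ forall x, M x <-> img I (monfam K T0) x.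
Proof.
move=> monM fgM; have [T1 defM] := monomial_fin_gen_monfam monM fgM.
have [T0 [redT0 sub01 cover01]] := reduce_family T1.
by exists T0; split=> // x; rewrite defM; exact: img_monfam_reduce.
Qed.

End ReducedGenerators.

Section Syzygies.
Variables (K : fieldType) (n : nat) (G : seq (word n)).
Local Notation I := (monideal (K:=K) G).
Variables (m : nat) (T : seq ('I_m * word n)).
Hypothesis redT : reduced G T.

Lemma syz_reduced : reduced G (syz G T).
Proof.
split=> [|[l v]|[l v] [l' v'] /=]; first exact: undup_uniq.
  by rewrite mem_syz // => /and3P [].
rewrite !mem_syz // => obs obs' eq_l pre; subst l'; congr pair.
apply/eqP; apply: contraT => ne_v; have lt_v := prefix_neq_size_lt pre ne_v.
have take_v : take (size v) v' = v by apply/eqP; rewrite -prefixE.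
case/and3P: obs => red_v _ _; case/and3P: obs' => _ _ /allP /(_ (size v)).
by rewrite mem_iota lt_v take_v red_v => /(_ isT).
Qed.

Lemma ker_monfam_syz (x : vec K n (size T)) :
  ker I (monfam K T) x <-> img I (monfam K (syz G T)) x.
Proof.
rewrite ker_monfamP // img_monfamP; split=> -[fx cover]; split=> // l u.
  move=> /cover red_wu; have [red_u|irr_u] := boolP (reducible G u); [by left | right].
  have ex_i : exists i, reducible G (mword T l ++ take i u) by exists (size u); rewrite take_size.
  have [i red_i i_min] := ex_minnP ex_i.
  exists (take i u); last exact: prefix_take.
  rewrite mem_syz //; apply/and3P; split=> //; first by apply/negP => /reducible_take; exact/negP.
  apply/allP => i'; rewrite mem_iota /= add0n size_take => lt_i'.
  have lt_i'i : (i' < i)%N.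
    by move: lt_i'; case: (ltnP i (size u)) => // le_ui lt_i'u; exact: leq_trans lt_i'u le_ui.
  rewrite take_takel ?(ltnW lt_i'i) //; apply/negP => /i_min; by rewrite leqNgt lt_i'i.
move=> /cover [red_u|[v obs_v /prefixP [s ->]]].
  exact: reducible_infix (suffix_infix _ _) red_u.
rewrite mem_syz // in obs_v; case/and3P: obs_v => red_v _ _.
by apply: reducible_infix red_v; rewrite catA prefixW ?prefix_prefix.
Qed.

Lemma monfam_deg_syz (dg : 'I_m -> int) (D : int) (d : nat) :
  bk_vanish_ideal I d -> (forall l, monfam_deg T dg l <= D) ->
  forall p, monfam_deg (syz G T) (monfam_deg T dg) p <= D + (d%:Z - 1).
Proof.
move=> vanish le_D p; have := le_D (mindex _ p); have := mem_monfam p.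
rewrite /monfam_deg; move: (mindex _ p) (mword _ p) => l v; rewrite mem_syz // => obs le_l.
have [g [gG ming lt_vg _]] := obstruction_mingen redT obs.
have lt_vd := leq_trans lt_vg (size_mingen_le vanish gG ming).
lia.
Qed.

End Syzygies.

Section HomogeneousComponents.
Variables (K : fieldType) (n : nat) (G : seq (word n)) (m : nat) (dg : 'I_m -> int).
Local Notation vec := (vec K n m).
Local Notation I := (monideal (K:=K) G).
Implicit Types (x y : vec) (e : int).

Definition hcomp e x : vec := fun j w => if (size w)%:Z + dg j == e then x j w else 0.

Lemma hcomp0 e : hcomp e (@vzero K n m) = @vzero K n m.
Proof.
apply: functional_extensionality => j; apply: functional_extensionality => w.
by rewrite /hcomp; case: ifP.
Qed.

Lemma hcompD e x y : hcomp e (vadd x y) = vadd (hcomp e x) (hcomp e y).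
Proof.
apply: functional_extensionality => j; apply: functional_extensionality => w.
by rewrite /hcomp /vadd /seradd; case: ifP; rewrite ?addr0.
Qed.

Lemma hcomp_mul_cmono e x c v :
  hcomp e (vmulr x (cmono c v)) = vmulr (hcomp (e - (size v)%:Z) x) (cmono c v).
Proof.
apply: functional_extensionality => j; apply: functional_extensionality => w.
rewrite /hcomp /vmulr !sermul_cmonor.
case: (boolP (suffix v w)) => [/suffixP [u ->]|_]; last by case: ifP.
have -> : (size (u ++ v) - size v)%N = size u by rewrite size_cat addnK.
rewrite take_size_cat //.
have -> : ((size u)%:Z + dg j == e - (size v)%:Z) = ((size (u ++ v))%:Z + dg j == e).
  by rewrite eq_sym subr_eq eq_sym size_cat PoszD addrAC.
by case: ifP; rewrite ?mul0r.
Qed.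

Lemma hcomp_id e x : vhomog dg x e -> hcomp e x = x.
Proof.
move=> homx; apply: functional_extensionality => j; apply: functional_extensionality => w.
by rewrite /hcomp; case: eqP => // ne; apply/esym/eqP; apply: contraT => /homx /ne.
Qed.

Lemma hcomp_other e e' x : vhomog dg x e' -> e' != e -> hcomp e x = @vzero K n m.
Proof.
move=> homx ne; apply: functional_extensionality => j; apply: functional_extensionality => w.
rewrite /hcomp; case: eqP => // eq_e; apply/eqP; apply: contraT => /homx eq_e'.
by rewrite -eq_e' eq_e eqxx in ne.
Qed.

Lemma rspan_hcomp (B : vec -> Prop) x :
  (forall y, B y -> exists e, vhomog dg y e) -> rspan I B x ->
  forall e, rspan I (fun y => B y /\ exists2 e', e' <= e & vhomog dg y e') (hcomp e x).
Proof.
move=> homB; elim=> {x} [x Bx| |x y _ IHx _ IHy|x a [s supp_a] _ IHx|x y _ IHx xy] e.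
- have [e0 hom0] := homB x Bx; have [eq_e|ne] := eqVneq e0 e.
    by rewrite -eq_e hcomp_id //; apply: rs_gen; split=> //; exists e0.
  by rewrite (hcomp_other hom0 ne); exact: rs_zero.
- by rewrite hcomp0; exact: rs_zero.
- by rewrite hcompD; exact: rs_add.
- move: a supp_a; apply: finsupp_ind => [|a t IHa].
    by rewrite vmulr0 hcomp0; exact: rs_zero.
  rewrite (ser_cmono_split a t) vmulrDr hcompD; apply: rs_add IHa _.
  rewrite hcomp_mul_cmono; apply: rs_mul (fin_supp_cmono _ _) _.
  apply: rspan_sub (IHx _) => y [By [e' le_e' hom_y]]; apply: rs_gen; split=> //.
  by exists e' => //; apply: le_trans le_e' _; rewrite gerBl.
- apply: rs_eq (IHx e) _ => j; have /monidealP [[s supp] red] := xy j.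
  apply/monidealP; split=> [|w]; last first.
    by rewrite /sersub /seradd /seropp /hcomp; case: ifP => _; [exact: red | rewrite subrr eqxx].
  exists s => w; rewrite /sersub /seradd /seropp /hcomp.
  by case: ifP => _; [exact: supp | rewrite subrr eqxx].
Qed.

End HomogeneousComponents.

Section BettiBounds.
Variables (K : fieldType) (n : nat) (G : seq (word n)) (m : nat) (dg : 'I_m -> int).
Local Notation vec := (vec K n m).
Local Notation I := (monideal (K:=K) G).

Lemma rspan_drop_redundant (S : vec -> Prop) b x :
  rspan I (fun y => S y /\ y <> b) b -> rspan I S x -> rspan I (fun y => S y /\ y <> b) x.
Proof.
move=> span_b; apply: rspan_sub => y Sy.
by case: (classic (y = b)) => [->|ne] //; apply: rs_gen.
Qed.

Lemma bk_vanish_monfam (T : seq ('I_m * word n)) (D : int) :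
  (forall l, monfam_deg T dg l <= D) -> bk_vanish I dg (img I (monfam K T)) D.
Proof.
move=> le_D B [homB spanB minB] b Bb nz_b e hom_b; rewrite leNgt; apply/negP => lt_De.
(* b is redundant: every monomial of the family has degree <= D < e, so taking
   homogeneous components expresses it through elements of B other than b. *)
apply: (minB b Bb) => x /spanB; apply: rspan_drop_redundant.
have /img_monfamP [fb cover] : img I (monfam K T) b by apply/spanB; exact: rs_gen.
apply: rspan_monomial_cover => // j u nz; case: (cover j u nz) => [red_u|[w jwT pre_w]].
  by left.
right; exists w => //.
have span_w : rspan I B (vmono K j w).
  by apply/spanB; apply: rs_gen; apply/monfamP; exists j, w.
have := rspan_hcomp homB span_w ((size w)%:Z + dg j); rewrite hcomp_id; last exact: vmono_homog.
apply: rspan_sub => y [By [e' le_e' hom_y]]; apply: rs_gen; split=> // eq_yb.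
have [l [eq_j eq_w]] : exists l, mindex T l = j /\ mword T l = w.
  by have [l [<- <-]] := monfam_onto jwT; exists l.
have := le_D l; rewrite /monfam_deg eq_j eq_w => le_wD.
rewrite eq_yb in hom_y; move: (hom_y j u nz) le_e'; rewrite (hom_b j u nz) => <-.
by move/le_trans/(_ le_wD); rewrite leNgt lt_De.
Qed.

Lemma fam_min_basis_deg_le (X : vec -> Prop) k (fam : 'I_k -> vec) dgk (D : int) :
  fam_min_basis I dg X fam dgk -> bk_vanish I dg X D ->
  (forall i, fam i <> @vzero K n m) -> forall i, dgk i <= D.
Proof.
move=> [hom span min] vanish nz i.
apply: (vanish (fun y => exists i, y = fam i)) (nz i) _ (hom i); last by exists i.
split=> [_ [i' ->]|//|_ [i' ->] span_others]; first by exists (dgk i').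
apply: (min i') => x /span_others; apply: rspan_sub => _ [[i'' ->] ne].
by apply: rs_gen; exists i''; split=> //; apply: contra_notN ne => /eqP ->.
Qed.

End BettiBounds.

Lemma fam_min_basis_ext (K : fieldType) n (I : ser K n -> Prop) m dg
    (X Y : vec K n m -> Prop) k (fam : 'I_k -> vec K n m) dgk :
  (forall x, X x <-> Y x) -> fam_min_basis I dg X fam dgk -> fam_min_basis I dg Y fam dgk.
Proof.
move=> XY [hom span min]; split=> // [x|i span_others]; first by rewrite -XY.
by apply: (min i) => x /XY; exact: span_others.
Qed.

(* A stage is a graded free module (+)_(l < sdim) A[-sdeg l] together with the
   reduced family of monomials generating the next syzygy module inside it. *)
Record stage (n : nat) :=
  Stage { sdim : nat; sdeg : 'I_sdim -> int; sfam : seq ('I_sdim * word n) }.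
Arguments sdeg {n} s _.

Section Resolution.
Variables (K : fieldType) (n : nat) (G : seq (word n)).
Local Notation I := (monideal (K:=K) G).
Local Notation stage := (stage n).

Definition next_stage (L : stage) : stage :=
  Stage (monfam_deg (sfam L) (sdeg L)) (syz G (sfam L)).

Fixpoint stages (L0 : stage) (i : nat) : stage :=
  if i is i'.+1 then next_stage (stages L0 i') else L0.

Lemma stages_reduced L0 i : reduced G (sfam L0) -> reduced G (sfam (stages L0 i)).
Proof. by move=> redL0; elim: i => //= i; exact: syz_reduced. Qed.

Lemma stages_deg_le L0 (d : nat) (D : int) :
  reduced G (sfam L0) -> bk_vanish_ideal I d ->
  (forall l, monfam_deg (sfam L0) (sdeg L0) l <= D) ->
  forall i l, monfam_deg (sfam (stages L0 i)) (sdeg (stages L0 i)) l <= D + i%:Z * (d%:Z - 1).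
Proof.
move=> redL0 vanish le_D; elim=> [|i IH] l; first by rewrite mul0r addr0.
apply: le_trans (monfam_deg_syz (stages_reduced i redL0) vanish IH l) _.
by rewrite intS mulrDl mul1r -addrA lerD2l addrC.
Qed.

Lemma stages_min_graded_res r (delta : 'I_r -> int) (M : vec K n r -> Prop)
    (T0 : seq ('I_r * word n)) :
  reduced G T0 -> (forall x, M x <-> img I (monfam K T0) x) ->
  let L := stages (Stage delta T0) in
  min_graded_res I delta M (fun i => sdeg (L i.+1)) (monfam K T0)
                 (fun i => monfam K (sfam (L i.+1))).
Proof.
move=> redT0 defM L.
have redL i : reduced G (sfam (L i)) := @stages_reduced (Stage delta T0) i redT0.
split=> [|x|i|i x].
- by apply: fam_min_basis_ext (monfam_min_basis K _ redT0) => x; rewrite defM.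
- exact: (@ker_monfam_syz K n G _ _ redT0 x).
- exact: (monfam_min_basis K _ (redL i.+1)).
- exact: (@ker_monfam_syz K n G _ _ (redL i.+1) x).
Qed.

End Resolution.

Theorem mainTheorem16 (K : fieldType) (n : nat) (G : seq (word n))
    (r : nat) (delta : 'I_r -> int) (M : vec K n r -> Prop) :
  is_monomial (monideal (K:=K) G) M -> fin_gen (monideal (K:=K) G) M ->
  exists (rk : nat -> nat) (dg : forall i, 'I_(rk i) -> int)
         (phi0 : 'I_(rk 0%N) -> vec K n r)
         (phi : forall i, 'I_(rk i.+1) -> vec K n (rk i)),
    [/\ min_graded_res (monideal (K:=K) G) delta M dg phi0 phi,
        is_monomial (monideal (K:=K) G) M /\ fin_gen (monideal (K:=K) G) M,
        forall i, is_monomial (monideal (K:=K) G) (img (monideal (K:=K) G) (phi i)) /\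
                  fin_gen (monideal (K:=K) G) (img (monideal (K:=K) G) (phi i)) &
        forall (d : nat) (Delta : int),
          bk_vanish_ideal (monideal (K:=K) G) d ->
          bk_vanish (monideal (K:=K) G) delta M Delta ->
          bk_vanish (monideal (K:=K) G) delta M Delta /\
          forall i, bk_vanish (monideal (K:=K) G) (dg i) (img (monideal (K:=K) G) (phi i))
                      (Delta + (i.+1)%:Z * (d%:Z - 1))].
Proof.
move=> monM fgM; have [T0 [redT0 defM]] := monomial_fin_gen_reduced monM fgM.
pose L := stages G (Stage delta T0).
have res := stages_min_graded_res delta redT0 defM.
exists (fun i => sdim (L i.+1)), (fun i => sdeg (L i.+1)), (monfam K T0),
       (fun i => monfam K (sfam (L i.+1))).
split=> // [i|d Delta vanishI vanishM].
  by split; [exact: img_monfam_monomial | exact: img_monfam_fin_gen].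
have [basisM _ _ _] := res.
have le_Delta := fam_min_basis_deg_le basisM vanishM (@monfam_neq0 K n r T0).
split=> // i; apply: bk_vanish_monfam => l.
exact: (stages_deg_le (L0 := Stage delta T0) (i := i.+1) redT0 vanishI le_Delta l).
Qed.
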